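(* For all $a,b\in[0,\infty]$ with $a\leq b$, there exist sequences $(\ell_p)_{p=1}^\infty$ and $(\gamma_p)_{p=1}^\infty$ of positive reals such that: (a) $\lim_{p\to\infty}\gamma_{2p+1}=a$ and $\lim_{p\to\infty}\gamma_{2p}=b$; (b) $\lim_{p\to\infty}(\ell_{p+1}-\ell_p)=\infty$; (c) $\lim_{p\to\infty}\ell_p/e^{\gamma_p\ell_p}=0$; (d) $\limsup_{p\to\infty}\gamma_{p+1}\ell_{p+1}/\ell_p\leq b$; (e) $\gamma_p\ell_p+1\leq\gamma_{p+1}\ell_{p+1}$ for all $p\in\mathbb N$; (f) for every constant $c\geq0$, $\lim_{p\to\infty}\big(cp+\sum_{j=1}^p\ell_j\big)/e^{\gamma_p\ell_p}=0$. *)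

From Stdlib Require Import Reals.
From Coquelicot Require Import Coquelicot.

From Stdlib Require Import Reals Lra Lia Psatz.
From Coquelicot Require Import Coquelicot.
Open Scope R_scope.

(* Let γ interleave two sequences tending to a (odd indices) and to b (even
   indices), bounded below by 1/(p+1).  Define ℓ recursively by
   ℓ_{p+1} = max(ℓ_p + 2p + 3, (γ_p ℓ_p + 1)/γ_{p+1}): the first branch makes
   the gaps ℓ_{p+1} - ℓ_p diverge and ℓ_p ≥ (p+1)², the second gives (e).
   Then x_p = γ_p ℓ_p ≥ p + 1, while ℓ_p ≤ x_p² and ∑_{j ≤ p} ℓ_j ≤ x_p³, so
   (c) and (f) follow from e^x ≥ x⁴/256.  Finally γ_{p+1}ℓ_{p+1}/ℓ_p is at most
   max(γ_{p+1}(1 + 3/(p+1)), γ_p + 1/(p+1)), whose lim sup is at most b. *)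

Lemma INR_succ_pos (k : nat) : 0 < INR k + 1.
Proof. pose proof (pos_INR k); lra. Qed.

Lemma is_lim_seq_INR_succ : is_lim_seq (fun k => INR k + 1) p_infty.
Proof.
  apply is_lim_seq_le_p_loc with INR; [|exact is_lim_seq_INR].
  exists O; intros; lra.
Qed.

Lemma is_lim_seq_inv_INR_succ : is_lim_seq (fun k => / (INR k + 1)) 0.
Proof. exact (is_lim_seq_inv _ _ is_lim_seq_INR_succ ltac:(discriminate)). Qed.

Lemma pow4_div_le_exp (y : R) : 0 <= y -> y ^ 4 / 256 <= exp y.
Proof.
  intros Hy.
  assert (Hq : y / 4 <= exp (y / 4)) by (pose proof (exp_ineq1_le (y / 4)); lra).
  replace (exp y) with (exp (y / 4) ^ 4)
    by (simpl; rewrite Rmult_1_r, <- !exp_plus; f_equal; field).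
  replace (y ^ 4 / 256) with ((y / 4) ^ 4) by field.
  apply pow_incr; lra.
Qed.

Lemma is_lim_seq_div_exp_cubic (z x : nat -> R) (K : R) :
  (forall p, 0 < x p) -> is_lim_seq x p_infty ->
  (forall p, 0 <= z p <= K * x p ^ 3) ->
  is_lim_seq (fun p => z p / exp (x p)) 0.
Proof.
  intros Hx Hlim Hz.
  apply is_lim_seq_le_le with (fun _ => 0) (fun p => 256 * K * / x p).
  - intro p; specialize (Hx p); specialize (Hz p).
    pose proof (pow4_div_le_exp (x p) ltac:(lra)) as He.
    assert (H4 : 0 < x p ^ 4 / 256) by (apply Rdiv_lt_0_compat; [apply pow_lt|]; lra).
    split; [apply Rdiv_le_0_compat; [lra | apply exp_pos]|].
    apply Rle_trans with (z p / (x p ^ 4 / 256)).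
    + apply Rmult_le_compat_l; [lra|]. apply Rinv_le_contravar; lra.
    + replace (256 * K * / x p) with (K * x p ^ 3 / (x p ^ 4 / 256)) by (field; lra).
      apply Rmult_le_compat_r; [left; apply Rinv_0_lt_compat|]; lra.
  - apply is_lim_seq_const.
  - pose proof (is_lim_seq_scal_l _ (256 * K) _ (is_lim_seq_inv _ _ Hlim ltac:(discriminate)))
      as H.
    simpl in H; rewrite Rmult_0_r in H; exact H.
Qed.

(* For [a = m_infty] the value is junk; only nonnegative [a] are used. *)
Definition upper_approx (a : Rbar) (k : nat) : R :=
  match a with Finite r => r + / (INR k + 1) | _ => INR k + 1 end.

Lemma is_lim_seq_upper_approx (a : Rbar) :
  Rbar_le 0 a -> is_lim_seq (upper_approx a) a.
Proof.
  destruct a as [r| |]; simpl; intros ha; [| exact is_lim_seq_INR_succ | contradiction].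
  pose proof (is_lim_seq_plus' _ _ r 0 (is_lim_seq_const r) is_lim_seq_inv_INR_succ) as H.
  rewrite Rplus_0_r in H; exact H.
Qed.

Lemma inv_INR_succ_le_upper_approx (a : Rbar) (k : nat) :
  Rbar_le 0 a -> / (INR k + 1) <= upper_approx a k.
Proof.
  pose proof (INR_succ_pos k); pose proof (pos_INR k).
  assert (/ (INR k + 1) <= 1) by (rewrite <- Rinv_1; apply Rinv_le_contravar; lra).
  destruct a as [r| |]; simpl; lra.
Qed.

Definition interleave (u v : nat -> R) (p : nat) : R :=
  if Nat.odd p then u (Nat.div2 p) else v (Nat.div2 p).

Lemma interleave_odd (u v : nat -> R) (p : nat) : interleave u v (2 * p + 1) = u p.
Proof.
  unfold interleave; rewrite Nat.odd_odd, Nat.add_1_r, Nat.div2_succ_double; reflexivity.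
Qed.

Lemma interleave_even (u v : nat -> R) (p : nat) : interleave u v (2 * p) = v p.
Proof. unfold interleave; rewrite Nat.odd_even, Nat.div2_double; reflexivity. Qed.

Lemma inv_INR_succ_div2_bounds (p : nat) :
  / (INR p + 1) <= / (INR (Nat.div2 p) + 1) <= 2 * / (INR p + 1).
Proof.
  pose proof (INR_succ_pos p); pose proof (INR_succ_pos (Nat.div2 p)).
  pose proof (Nat.div2_odd p) as Ep.
  assert (Hle : (Nat.div2 p <= p)%nat) by (destruct (Nat.odd p); simpl in *; lia).
  assert (Hge : (p <= 2 * Nat.div2 p + 1)%nat) by (destruct (Nat.odd p); simpl in *; lia).
  apply le_INR in Hle; apply le_INR in Hge; rewrite plus_INR, mult_INR in Hge; simpl in Hge.
  split; [apply Rinv_le_contravar; lra|].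
  replace (/ (INR (Nat.div2 p) + 1)) with (2 * / (2 * (INR (Nat.div2 p) + 1))) by (field; lra).
  apply Rmult_le_compat_l; [lra|]. apply Rinv_le_contravar; lra.
Qed.

Definition gamma (a b : Rbar) : nat -> R := interleave (upper_approx a) (upper_approx b).

Lemma inv_INR_succ_le_gamma (a b : Rbar) (p : nat) :
  Rbar_le 0 a -> Rbar_le 0 b -> / (INR p + 1) <= gamma a b p.
Proof.
  intros ha hb; pose proof (inv_INR_succ_div2_bounds p) as [Hp _].
  unfold gamma, interleave; destruct (Nat.odd p);
    eapply Rle_trans; [exact Hp | apply inv_INR_succ_le_upper_approx; exact ha
                      | exact Hp | apply inv_INR_succ_le_upper_approx; exact hb].
Qed.

Lemma gamma_le (r s : R) (p : nat) : r <= s -> gamma r s p <= s + 2 * / (INR p + 1).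
Proof.
  intros hrs; pose proof (inv_INR_succ_div2_bounds p) as [_ Hp].
  unfold gamma, interleave, upper_approx; destruct (Nat.odd p); lra.
Qed.

Section Lengths.

Variable g : nat -> R.
Hypothesis inv_INR_succ_le_g : forall p, / (INR p + 1) <= g p.

Fixpoint ell (p : nat) : R :=
  match p with
  | O => 1 + / g O
  | S q => Rmax (ell q + 2 * INR q + 3) ((g q * ell q + 1) / g (S q))
  end.

Lemma g_pos (p : nat) : 0 < g p.
Proof.
  eapply Rlt_le_trans; [|apply inv_INR_succ_le_g].
  apply Rinv_0_lt_compat, INR_succ_pos.
Qed.

Lemma ell_succ_ge (p : nat) : ell p + 2 * INR p + 3 <= ell (S p).
Proof. apply Rmax_l. Qed.

Lemma sqr_INR_succ_le_ell (p : nat) : (INR p + 1) ^ 2 <= ell p.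
Proof.
  induction p as [|q IH].
  - simpl; pose proof (Rinv_0_lt_compat _ (g_pos O)); lra.
  - pose proof (ell_succ_ge q); rewrite S_INR; nra.
Qed.

Lemma ell_pos (p : nat) : 0 < ell p.
Proof. pose proof (sqr_INR_succ_le_ell p); pose proof (INR_succ_pos p); nra. Qed.

Lemma growth_succ_ge (p : nat) : g p * ell p + 1 <= g (S p) * ell (S p).
Proof.
  pose proof (g_pos (S p)).
  replace (g p * ell p + 1) with (g (S p) * ((g p * ell p + 1) / g (S p))) by (field; lra).
  apply Rmult_le_compat_l; [lra | apply Rmax_r].
Qed.

Lemma INR_succ_le_growth (p : nat) : INR p + 1 <= g p * ell p.
Proof.
  induction p as [|q IH].
  - pose proof (g_pos O); simpl; rewrite Rmult_plus_distr_l, Rinv_r; lra.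
  - pose proof (growth_succ_ge q); rewrite S_INR; lra.
Qed.

Lemma ell_le_sqr_growth (p : nat) : ell p <= (g p * ell p) ^ 2.
Proof.
  pose proof (INR_succ_le_growth p); pose proof (INR_succ_pos p); pose proof (ell_pos p).
  assert (1 <= (INR p + 1) * g p).
  { apply Rle_trans with ((INR p + 1) * / (INR p + 1)); [right; field; lra|].
    apply Rmult_le_compat_l; [lra | apply inv_INR_succ_le_g]. }
  nra.
Qed.

Lemma sum_ell_bounds (p : nat) : 0 <= sum_n_m ell 1 p <= INR p * ell p.
Proof.
  induction p as [|q IH].
  - rewrite sum_n_m_zero by lia; unfold zero; simpl; lra.
  - rewrite sum_n_Sm by lia.
    change (plus (sum_n_m ell 1 q) (ell (S q))) with (sum_n_m ell 1 q + ell (S q)).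
    pose proof (ell_succ_ge q); pose proof (ell_pos q); pose proof (pos_INR q).
    rewrite S_INR; split; nra.
Qed.

Lemma is_lim_seq_growth : is_lim_seq (fun p => g p * ell p) p_infty.
Proof.
  apply is_lim_seq_le_p_loc with (fun p => INR p + 1); [|exact is_lim_seq_INR_succ].
  exists O; intros p _; apply INR_succ_le_growth.
Qed.

Lemma growth_pos (p : nat) : 0 < g p * ell p.
Proof. pose proof (INR_succ_le_growth p); pose proof (INR_succ_pos p); lra. Qed.

Lemma is_lim_seq_ell_increments : is_lim_seq (fun p => ell (p + 1) - ell p) p_infty.
Proof.
  apply is_lim_seq_le_p_loc with INR; [|exact is_lim_seq_INR].
  exists O; intros p _; rewrite Nat.add_1_r.
  pose proof (ell_succ_ge p); pose proof (pos_INR p); lra.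
Qed.

Lemma is_lim_seq_ell_div_exp : is_lim_seq (fun p => ell p / exp (g p * ell p)) 0.
Proof.
  apply (is_lim_seq_div_exp_cubic _ _ 1 growth_pos is_lim_seq_growth).
  intro p; pose proof (ell_le_sqr_growth p); pose proof (ell_pos p).
  pose proof (INR_succ_le_growth p); pose proof (pos_INR p).
  split; [lra | nra].
Qed.

Lemma is_lim_seq_sum_ell_div_exp (c : R) : 0 <= c ->
  is_lim_seq (fun p => (c * INR p + sum_n_m ell 1 p) / exp (g p * ell p)) 0.
Proof.
  intros hc; apply (is_lim_seq_div_exp_cubic _ _ (c + 1) growth_pos is_lim_seq_growth).
  intro p; pose proof (ell_le_sqr_growth p); pose proof (sum_ell_bounds p).
  pose proof (INR_succ_le_growth p); pose proof (pos_INR p); pose proof (ell_pos p).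
  set (x := g p * ell p) in *.
  assert (INR p <= x ^ 3) by nra.
  assert (INR p * ell p <= x ^ 3) by nra.
  split; nra.
Qed.

Lemma ell_ratio_le (p : nat) (u : R) : g p <= u -> g (S p) <= u ->
  g (S p) * ell (S p) / ell p <= (u + / (INR p + 1)) * (1 + 3 * / (INR p + 1)).
Proof.
  intros Hp HSp.
  pose proof (g_pos p); pose proof (g_pos (S p)); pose proof (ell_pos p).
  pose proof (sqr_INR_succ_le_ell p); pose proof (INR_succ_pos p); pose proof (pos_INR p).
  set (t := / (INR p + 1)).
  assert (Ht : (INR p + 1) * t = 1) by (unfold t; field; lra).
  assert (0 < t) by (apply Rinv_0_lt_compat; lra).
  assert (Hgap : 2 * INR p + 3 <= 3 * t * ell p) by nra.
  assert (Hone : 1 <= t * ell p) by nra.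
  apply Rmult_le_reg_r with (ell p); [lra|].
  unfold Rdiv; rewrite Rmult_assoc, Rinv_l, Rmult_1_r by lra.
  simpl ell; apply Rmax_case; [nra|].
  replace (g (S p) * ((g p * ell p + 1) / g (S p))) with (g p * ell p + 1) by (field; lra).
  nra.
Qed.

Lemma LimSup_ell_ratio_le (s K : R) : 0 <= K ->
  (forall p, g p <= s + K * / (INR p + 1)) ->
  Rbar_le (LimSup_seq (fun p => g (p + 1)%nat * ell (p + 1) / ell p)) s.
Proof.
  intros hK hg.
  set (t := fun p : nat => / (INR p + 1)).
  set (W := fun p => (s + K * t p + t p) * (1 + 3 * t p)).
  assert (HW : is_lim_seq W s).
  { pose proof is_lim_seq_inv_INR_succ as Ht; fold t in Ht.
    pose proof (is_lim_seq_scal_l _ K _ Ht) as HK.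
    pose proof (is_lim_seq_scal_l _ 3 _ Ht) as H3.
    pose proof (is_lim_seq_plus' _ _ _ _ (is_lim_seq_plus' _ _ _ _ (is_lim_seq_const s) HK) Ht)
      as Hl.
    pose proof (is_lim_seq_mult' _ _ _ _ Hl (is_lim_seq_plus' _ _ _ _ (is_lim_seq_const 1) H3))
      as H.
    simpl in H; replace ((s + K * 0 + 0) * (1 + 3 * 0)) with s in H by ring; exact H. }
  rewrite <- (is_LimSup_seq_unique _ _ (is_lim_LimSup_seq _ _ HW)).
  apply LimSup_le; exists O; intros p _; rewrite Nat.add_1_r.
  apply ell_ratio_le; [apply hg|].
  eapply Rle_trans; [apply hg|]; apply Rplus_le_compat_l, Rmult_le_compat_l; [exact hK|].
  rewrite S_INR; apply Rinv_le_contravar; pose proof (INR_succ_pos p); lra.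
Qed.

End Lengths.

Theorem lemma2p4 (a b : Rbar) (ha : Rbar_le (Finite 0) a) (hab : Rbar_le a b) :
  exists (l g : nat -> R),
    (forall p : nat, (1 <= p)%nat -> 0 < l p /\ 0 < g p) /\
    (* (a) *)
    is_lim_seq (fun p : nat => g (2 * p + 1)%nat) a /\
    is_lim_seq (fun p : nat => g (2 * p)%nat) b /\
    (* (b) *)
    is_lim_seq (fun p : nat => l (p + 1)%nat - l p) p_infty /\
    (* (c) *)
    is_lim_seq (fun p : nat => l p / exp (g p * l p)) 0 /\
    (* (d) *)
    Rbar_le (LimSup_seq (fun p : nat => g (p + 1)%nat * l (p + 1)%nat / l p)) b /\
    (* (e) *)
    (forall p : nat, (1 <= p)%nat -> g p * l p + 1 <= g (p + 1)%nat * l (p + 1)%nat) /\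
    (* (f) *)
    (forall c : R, 0 <= c ->
       is_lim_seq (fun p : nat => (c * INR p + sum_n_m l 1 p) / exp (g p * l p)) 0).
Proof.
  assert (hb : Rbar_le 0 b) by (eapply Rbar_le_trans; eauto).
  set (g := gamma a b).
  assert (hg : forall p, / (INR p + 1) <= g p) by (intro; apply inv_INR_succ_le_gamma; auto).
  exists (ell g), g.
  split; [intros p _; split; [apply ell_pos | apply g_pos]; exact hg|].
  split; [eapply is_lim_seq_ext; [intro; symmetry; apply interleave_odd|];
          apply is_lim_seq_upper_approx, ha|].
  split; [eapply is_lim_seq_ext; [intro; symmetry; apply interleave_even|];
          apply is_lim_seq_upper_approx, hb|].
  split; [apply is_lim_seq_ell_increments|].
  split; [apply is_lim_seq_ell_div_exp, hg|].
  split.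
  { destruct b as [s| |]; [| now destruct LimSup_seq | contradiction].
    destruct a as [r| |]; try contradiction.
    apply (LimSup_ell_ratio_le g hg s 2); [lra|].
    intro p; apply gamma_le, hab. }
  split; [intros p _; rewrite Nat.add_1_r; apply growth_succ_ge, hg|].
  intros c hc; apply is_lim_seq_sum_ell_div_exp; assumption.
Qed.
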